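(* Let $\mathbf{F}$ be a finite field with $q$ elements, $k$ a field in which $q$ is nonzero, and $0\le r\le n$. An element $u\in\mathfrak{a}_{n,r}$ is the unit (two-sided identity element) of $\mathfrak{a}_{n,r}$ if and only if both of the following hold: (a) $[g^{-1}]\,u\,[g]=u$ in $k[\mathfrak{M}_n]$ for every $g\in\mathbf{GL}_n(\mathbf{F})$; (b) $u\cdot[e_{n,r}]=[e_{n,r}]$, where $e_{n,r}=\begin{pmatrix}I_r&\\&0_{n-r}\end{pmatrix}$.
   Context: $\mathfrak{M}_n$ is the monoid of $n\times n$ matrices over $\mathbf{F}$; $k[\mathfrak{M}_n]$ its monoid algebra with basis $[m]$. $\mathfrak{a}_{n,r}$ is the two-sided ideal spanned by $[m]$ with $\operatorname{rank}m\le r$. *)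

From HB Require Import structures.
From mathcomp Require Import all_boot all_order all_algebra all_field.
Set Implicit Arguments. Unset Strict Implicit. Unset Printing Implicit Defensive.
Import GRing.Theory.
Local Open Scope ring_scope.

(* The monoid algebra k[M_n(F)]: elements are finitely supported (here: all,
   since M_n(F) is finite) functions M_n(F) -> k; [m] is the indicator of m. *)
Definition malg (F : finFieldType) (n : nat) (k : fieldType) :=
  {ffun 'M[F]_n -> k}.

Definition mbasis (F : finFieldType) (n : nat) (k : fieldType) (m : 'M[F]_n)
  : malg F n k := [ffun x => (x == m)%:R].

Definition mmul (F : finFieldType) (n : nat) (k : fieldType) (a b : malg F n k)
  : malg F n k :=
  [ffun m => \sum_(x : 'M[F]_n) \sum_(y : 'M[F]_n | x *m y == m) a x * b y].

(* membership in the ideal a_{n,r}: spanned by [m] with rank m <= r *)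
Definition in_arn (F : finFieldType) (n : nat) (k : fieldType) (r : nat)
  (a : malg F n k) : Prop :=
  forall m : 'M[F]_n, (r < \rank m)%N -> a m = 0.

Definition is_unit_of_arn (F : finFieldType) (n : nat) (k : fieldType) (r : nat)
  (u : malg F n k) : Prop :=
  forall x : malg F n k, in_arn r x -> mmul u x = x /\ mmul x u = x.

Definition e_nr (F : finFieldType) (n r : nat) : 'M[F]_n := pid_mx r.

From mathcomp Require Import all_boot all_order all_algebra all_field.
From mathcomp Require Import ring.
Set Implicit Arguments. Unset Strict Implicit. Unset Printing Implicit Defensive.
Import GRing.Theory.
Local Open Scope ring_scope.

(* Conjugation by an invertible [g] is an automorphism of k[M_n] preserving
   a_{n,r}, so it maps the unit of a_{n,r} to a unit, which must be the same one.
   Conversely, invariance under conjugation means that [u] commutes with every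
   [[g]]; since every [m] of rank at most [r] factors as [g *m e_{n,r} *m h] with
   [g] invertible, [u [m] = [g] u [e_{n,r}] [h] = [m]], so [u] is a left unit of
   a_{n,r}.  Transposition is an anti-automorphism preserving a_{n,r}, so the
   transpose of [u] is a right unit, and therefore equal to [u]. *)

Section IndicatorSums.
Variables (R : comPzRingType) (T : finType).

Lemma sum_indicator_mull (G : T -> R) (t : T) : \sum_z (z == t)%:R * G z = G t.
Proof.
rewrite (bigD1 t) //= eqxx mul1r big1 ?addr0 // => z /negbTE ->.
by rewrite mul0r.
Qed.

Lemma sum_fiber_mulr (I J : finType) (G : T -> R) (g : I -> J -> T) (f : I -> J -> R) :
  \sum_z G z * (\sum_i \sum_j (g i j == z)%:R * f i j) = \sum_i \sum_j G (g i j) * f i j.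
Proof.
under eq_bigr do rewrite mulr_sumr; rewrite exchange_big; apply: eq_bigr => i _.
under eq_bigr do rewrite mulr_sumr; rewrite exchange_big; apply: eq_bigr => j _.
rewrite -(sum_indicator_mull (fun z => G z * f i j) (g i j)).
by apply: eq_bigr => z _; rewrite eq_sym; ring.
Qed.

End IndicatorSums.

Section MonoidAlgebra.
Variables (F : finFieldType) (k : fieldType) (n : nat).
Local Notation M := ('M[F]_n).
Local Notation A := (malg F n k).
Local Notation mb := (@mbasis F n k).

Lemma mmulE (a b : A) m :
  mmul a b m = \sum_(x : M) \sum_(y : M) (x *m y == m)%:R * (a x * b y).
Proof.
rewrite ffunE; apply: eq_bigr => x _; rewrite big_mkcond; apply: eq_bigr => y _.
by case: eqP; rewrite ?mul1r ?mul0r.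
Qed.

Lemma mmulA (a b c : A) : mmul (mmul a b) c = mmul a (mmul b c).
Proof.
apply/ffunP => m; rewrite !mmulE exchange_big /=.
under eq_bigr => w _.
  under eq_bigr => z _ do rewrite (mulrC (mmul a b z)) mulrA mmulE.
  rewrite (sum_fiber_mulr (fun z => (z *m w == m)%:R * c w)); over.
under [RHS]eq_bigr => x _.
  under eq_bigr => v _ do rewrite mulrA mmulE.
  rewrite (sum_fiber_mulr (fun v => (x *m v == m)%:R * a x)); over.
rewrite exchange_big; apply: eq_bigr => x _; rewrite exchange_big.
by do 2!apply: eq_bigr => ? _; rewrite mulmxA; ring.
Qed.

Lemma mmul_mbasisl (g : M) (a : A) m :
  mmul (mb g) a m = \sum_(y : M) (g *m y == m)%:R * a y.
Proof.
rewrite mmulE -(sum_indicator_mull (fun x => \sum_y (x *m y == m)%:R * a y) g).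
by apply: eq_bigr => x _; rewrite mulr_sumr; apply: eq_bigr => y _; rewrite ffunE; ring.
Qed.

Lemma mmul_mbasisr (a : A) (g : M) m :
  mmul a (mb g) m = \sum_(x : M) (x *m g == m)%:R * a x.
Proof.
rewrite mmulE; apply: eq_bigr => x _.
rewrite -(sum_indicator_mull (fun y => (x *m y == m)%:R * a x) g).
by apply: eq_bigr => y _; rewrite ffunE; ring.
Qed.

Lemma mbasisM (x y : M) : mmul (mb x) (mb y) = mb (x *m y).
Proof.
apply/ffunP => m; rewrite mmul_mbasisl [RHS]ffunE.
under eq_bigr do rewrite ffunE mulrC.
by rewrite sum_indicator_mull eq_sym.
Qed.

Lemma mmul1l (a : A) : mmul (mb 1%:M) a = a.
Proof.
apply/ffunP => m; rewrite mmul_mbasisl.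
by under eq_bigr do rewrite mul1mx; rewrite sum_indicator_mull.
Qed.

Lemma mmul1r (a : A) : mmul a (mb 1%:M) = a.
Proof.
apply/ffunP => m; rewrite mmul_mbasisr.
by under eq_bigr do rewrite mulmx1; rewrite sum_indicator_mull.
Qed.

Lemma mmul_sum_mbasisr (a b : A) m :
  mmul a b m = \sum_(y : M) b y * mmul a (mb y) m.
Proof.
rewrite mmulE exchange_big; apply: eq_bigr => y _.
by rewrite mmul_mbasisr mulr_sumr; apply: eq_bigr => x _; ring.
Qed.

Definition mconj (g : M) (a : A) : A := mmul (mmul (mb (invmx g)) a) (mb g).

Lemma mconjM (g : M) (a b : A) : g \in unitmx ->
  mconj g (mmul a b) = mmul (mconj g a) (mconj g b).
Proof.
by move=> gU; rewrite /mconj !mmulA -(mmulA (mb g)) mbasisM mulmxV // mmul1l.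
Qed.

Lemma mconjK (g : M) (a : A) : g \in unitmx -> mconj g (mconj (invmx g) a) = a.
Proof.
move=> gU; rewrite /mconj invmxK -!mmulA mbasisM mulVmx // mmul1l.
by rewrite !mmulA mbasisM mulVmx // mmul1r.
Qed.

Lemma mconj_fixed_commute (g : M) (a : A) : g \in unitmx -> mconj g a = a ->
  mmul a (mb g) = mmul (mb g) a.
Proof.
move=> gU ga; rewrite -[in RHS]ga /mconj -!mmulA mbasisM mulmxV //.
by rewrite mmul1l.
Qed.

Definition malg_tr (a : A) : A := [ffun m => a m^T].

Lemma malg_trK : involutive malg_tr.
Proof. by move=> a; apply/ffunP => m; rewrite !ffunE trmxK. Qed.

Lemma malg_trM (a b : A) : malg_tr (mmul a b) = mmul (malg_tr b) (malg_tr a).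
Proof.
apply/ffunP => m; rewrite ffunE !mmulE exchange_big /=.
rewrite (reindex_inj (@trmx_inj _ n n)); apply: eq_bigr => y _.
rewrite (reindex_inj (@trmx_inj _ n n)); apply: eq_bigr => x _.
by rewrite -trmx_mul (inj_eq (@trmx_inj _ n n)) !ffunE; ring.
Qed.

Section RankIdeal.
Variable r : nat.

Lemma in_arn_mmull (a b : A) : in_arn r b -> in_arn r (mmul a b).
Proof.
move=> hb m hm; rewrite mmulE big1 // => x _; rewrite big1 // => y _.
case: eqP => [xy_m|_]; last by rewrite mul0r.
by rewrite hb ?mulr0 // (leq_trans hm) // -xy_m mxrankM_maxr.
Qed.

Lemma in_arn_mmulr (a b : A) : in_arn r a -> in_arn r (mmul a b).
Proof.
move=> ha m hm; rewrite mmulE big1 // => x _; rewrite big1 // => y _.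
case: eqP => [xy_m|_]; last by rewrite mul0r.
by rewrite ha ?mul0r ?mulr0 // (leq_trans hm) // -xy_m mxrankM_maxl.
Qed.

Lemma in_arn_mbasis (m : M) : (\rank m <= r)%N -> in_arn r (mb m).
Proof.
move=> hm x hx; rewrite ffunE; case: eqP => // x_m.
by move: hx; rewrite x_m ltnNge hm.
Qed.

Lemma in_arn_mconj (g : M) (a : A) : in_arn r a -> in_arn r (mconj g a).
Proof. by move=> ha; apply/in_arn_mmulr/in_arn_mmull. Qed.

Lemma in_arn_tr (a : A) : in_arn r a -> in_arn r (malg_tr a).
Proof. by move=> ha m hm; rewrite ffunE ha // mxrank_tr. Qed.

Lemma is_unit_of_arn_unique (u v : A) : in_arn r u -> in_arn r v ->
  is_unit_of_arn r u -> is_unit_of_arn r v -> u = v.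
Proof. by move=> hu hv Uu Uv; rewrite -[LHS](Uv u hu).2 (Uu v hv).1. Qed.

Lemma is_unit_of_arn_mconj (g : M) (u : A) : g \in unitmx ->
  is_unit_of_arn r u -> is_unit_of_arn r (mconj g u).
Proof.
move=> gU Uu x hx; have hy := in_arn_mconj (invmx g) hx.
rewrite -(mconjK x gU) -!mconjM //.
by case: (Uu _ hy) => -> ->.
Qed.

Lemma left_unit_of_arn (u : A) :
  (forall m : M, (\rank m <= r)%N -> mmul u (mb m) = mb m) ->
  forall x, in_arn r x -> mmul u x = x.
Proof.
move=> u_mb x hx; apply/ffunP => m; rewrite mmul_sum_mbasisr.
rewrite -[RHS](sum_indicator_mull x m); apply: eq_bigr => y _.
have [y_le|y_gt] := leqP (\rank y) r; last by rewrite hx // !mul0r mulr0.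
by rewrite u_mb // ffunE eq_sym mulrC.
Qed.

Lemma left_unit_is_unit_of_arn (u : A) : in_arn r u ->
  (forall x, in_arn r x -> mmul u x = x) -> is_unit_of_arn r u.
Proof.
move=> hu u_l.
have tu_r x : in_arn r x -> mmul x (malg_tr u) = x.
  by move=> hx; rewrite -[x in LHS]malg_trK -malg_trM u_l ?malg_trK //; apply: in_arn_tr.
have tu : malg_tr u = u by rewrite -[LHS]u_l ?tu_r //; apply: in_arn_tr.
by move=> x hx; rewrite -[in mmul x u]tu u_l ?tu_r.
Qed.

Lemma mmul_mbasis_rank_le (u : A) :
  (forall g : M, g \in unitmx -> mconj g u = u) ->
  mmul u (mb (e_nr F n r)) = mb (e_nr F n r) ->
  forall m : M, (\rank m <= r)%N -> mmul u (mb m) = mb m.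
Proof.
move=> u_mconj u_e m m_le; set g := col_ebase m.
pose h : M := pid_mx (\rank m) *m row_ebase m.
have gU : g \in unitmx := col_ebase_unit m.
have -> : m = g *m (e_nr F n r *m h).
  rewrite /e_nr /h [pid_mx r *m _]mulmxA mul_pid_mx (minn_idPr m_le).
  by rewrite (minn_idPr (rank_leq_row m)) mulmxA mulmx_ebase.
rewrite -!mbasisM -mmulA mconj_fixed_commute ?u_mconj //.
by rewrite mmulA -(mmulA u) u_e.
Qed.

End RankIdeal.

End MonoidAlgebra.

Theorem lemma4p4 (F : finFieldType) (k : fieldType) (n r : nat)
  (hq : (#|F|%:R : k) != 0) (hrn : (r <= n)%N)
  (u : malg F n k) (hu : in_arn r u) :
  is_unit_of_arn r u <->
  ((forall g : 'M[F]_n, g \in unitmx ->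
      mmul (mmul (mbasis k (invmx g)) u) (mbasis k g) = u) /\
   mmul u (mbasis k (e_nr F n r)) = mbasis k (e_nr F n r)).
Proof.
have e_arn : in_arn r (mbasis k (e_nr F n r)).
  by apply: in_arn_mbasis; rewrite /e_nr rank_pid_mx.
split=> [Uu | [u_mconj u_e]].
  split=> [g gU|]; last exact: (Uu _ e_arn).1.
  apply: is_unit_of_arn_unique (in_arn_mconj g hu) hu (is_unit_of_arn_mconj gU Uu) Uu.
apply: left_unit_is_unit_of_arn hu (left_unit_of_arn _).
exact: mmul_mbasis_rank_le u_mconj u_e.
Qed.
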